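(* Let $M=L+S\in\mathbb{R}^{n_1\times n_2}$ where $L$ has rank $r$ and $S$ has support $\Omega$. Let $G\in\mathbb{R}^{n_1\times r_G}$ be a basis matrix such that $L_{\mathrm{new}}:=(I-GG^\top)L$ has rank $r_{\mathrm{new}}<r$, with reduced SVD $L_{\mathrm{new}}=U_{\mathrm{new}}\Sigma_{\mathrm{new}}V_{\mathrm{new}}^\top$. Let $$\Pi=\{[G\ U_{\mathrm{new}}]Y_1^\top+Y_2V_{\mathrm{new}}^\top:\ Y_1\in\mathbb{R}^{n_2\times(r_G+r_{\mathrm{new}})},\ Y_2\in\mathbb{R}^{n_1\times r_{\mathrm{new}}}\}.$$ If $\|\mathcal P_\Omega\mathcal P_\Pi\|\le 1/4$, $\lambda<3/10$, and there is a pair $(W,F)$ of $n_1\times n_2$ matrices (and a matrix $D$) obeying $$U_{\mathrm{new}}V_{\mathrm{new}}^\top+W=\lambda(\mathrm{sgn}(S)+F+\mathcal P_\Omega D)$$ with $\mathcal P_\Pi W=0$, $\|W\|\le 9/10$, $\mathcal P_\Omega F=0$, $\|F\|_\infty\le 9/10$ and $\|\mathcal P_\Omega D\|_F\le 1/4$, then $(L_{\mathrm{new}},S,L^\top G)$ is the unique solution of $$\min_{\tilde L_{\mathrm{new}},\tilde S,\tilde X}\|\tilde L_{\mathrm{new}}\|_*+\lambda\|\tilde S\|_1\ \text{ s.t. }\ \tilde L_{\mathrm{new}}+G\tilde X^\top+\tilde S=M.$$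
   Context: A basis matrix satisfies $G^\top G=I$; $[A\ B]$ is horizontal concatenation. $\mathcal P_\Pi$ is the orthogonal projection (w.r.t. the trace inner product) onto the linear space $\Pi$ of matrices; $\mathcal P_\Omega$ sets to zero all entries with index outside $\Omega$. $\|\mathcal A\|=\sup_{\|X\|_F=1}\|\mathcal A X\|_F$ for a linear operator $\mathcal A$. $\|W\|$ is the spectral norm, $\|F\|_\infty=\max|F_{ij}|$, $\|\cdot\|_F$ Frobenius norm, $\|\cdot\|_*$ nuclear norm, $\|X\|_1=\sum|X_{ij}|$; $\mathrm{sgn}$ is entrywise sign. The variables range over $\tilde L_{\mathrm{new}},\tilde S\in\mathbb{R}^{n_1\times n_2}$, $\tilde X\in\mathbb{R}^{n_2\times r_G}$. *)

From HB Require Import structures.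
From mathcomp Require Import all_boot all_order all_algebra.
From mathcomp Require Import boolp classical_sets reals.
Set Implicit Arguments. Unset Strict Implicit. Unset Printing Implicit Defensive.
Import Order.TTheory GRing.Theory Num.Theory.
Local Open Scope ring_scope.
Local Open Scope classical_set_scope.

Section Defs.
Variable R : realType.

Definition mx_inner {m n : nat} (A B : 'M[R]_(m, n)) : R :=
  \tr (A^T *m B).

(* Frobenius norm (for column vectors this is the Euclidean norm) *)
Definition frob {m n : nat} (A : 'M[R]_(m, n)) : R :=
  Num.sqrt (\sum_(i < m) \sum_(j < n) A i j ^+ 2).

Definition spec_norm {m n : nat} (W : 'M[R]_(m, n)) : R :=
  sup [set frob (W *m x) | x in [set x : 'cV[R]_n | frob x = 1]].

Definition op_norm {m n : nat} (A : 'M[R]_(m, n) -> 'M[R]_(m, n)) : R :=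
  sup [set frob (A X) | X in [set X : 'M[R]_(m, n) | frob X = 1]].

Definition linf_norm {m n : nat} (F : 'M[R]_(m, n)) : R :=
  \big[Num.max/0]_(i < m) \big[Num.max/0]_(j < n) `|F i j|.

Definition l1_norm {m n : nat} (X : 'M[R]_(m, n)) : R :=
  \sum_(i < m) \sum_(j < n) `|X i j|.

Definition sgn_mx {m n : nat} (X : 'M[R]_(m, n)) : 'M[R]_(m, n) :=
  \matrix_(i, j) Num.sg (X i j).

Definition is_svd {m n k : nat} (A : 'M[R]_(m, n)) (U : 'M[R]_(m, k))
    (s : 'rV[R]_k) (V : 'M[R]_(n, k)) : Prop :=
  [/\ U^T *m U = 1%:M, V^T *m V = 1%:M, (forall i, 0 <= s 0 i)
    & A = U *m diag_mx s *m V^T].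

Definition nuc_norm {m n : nat} (A : 'M[R]_(m, n)) : R :=
  xget 0 [set t : R | exists k (U : 'M[R]_(m, k)) (s : 'rV[R]_k)
                             (V : 'M[R]_(n, k)),
                        is_svd A U s V /\ t = \sum_(i < k) s 0 i].

Definition proj_Omega {m n : nat} (Om : {set 'I_m * 'I_n})
    (X : 'M[R]_(m, n)) : 'M[R]_(m, n) :=
  \matrix_(i, j) (if (i, j) \in Om then X i j else 0).

Definition orth_proj {m n : nat} (Pi : set 'M[R]_(m, n))
    (X : 'M[R]_(m, n)) : 'M[R]_(m, n) :=
  xget 0 [set Y | Pi Y /\ forall Z, Pi Z -> mx_inner (X - Y) Z = 0].

Definition Pi_space {n1 n2 rG rn : nat} (G : 'M[R]_(n1, rG))
    (U : 'M[R]_(n1, rn)) (V : 'M[R]_(n2, rn)) : set 'M[R]_(n1, n2) :=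
  [set X | exists (Y1 : 'M[R]_(n2, rG + rn)) (Y2 : 'M[R]_(n1, rn)),
           X = row_mx G U *m Y1^T + Y2 *m V^T].

Definition unique_minimizer {n1 n2 rG : nat} (lam : R) (G : 'M[R]_(n1, rG))
    (M : 'M[R]_(n1, n2)) (L0 S0 : 'M[R]_(n1, n2)) (X0 : 'M[R]_(n2, rG)) : Prop :=
  let obj (Lt St : 'M[R]_(n1, n2)) := nuc_norm Lt + lam * l1_norm St in
  L0 + G *m X0^T + S0 = M /\
  forall (Lt St : 'M[R]_(n1, n2)) (Xt : 'M[R]_(n2, rG)),
    Lt + G *m Xt^T + St = M ->
    obj L0 S0 <= obj Lt St /\
    (obj Lt St = obj L0 S0 -> [/\ Lt = L0, St = S0 & Xt = X0]).

End Defs.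

From HB Require Import structures.
From mathcomp Require Import all_boot all_order all_algebra.
From mathcomp Require Import boolp classical_sets reals.
From mathcomp Require Import complex spectral sesquilinear.
From mathcomp Require Import ring lra.
Import Order.TTheory GRing.Theory Num.Theory.
Local Open Scope ring_scope.

(* Write L0 = U diag(sigma) V^T = (1 - G G^T) L. A competitor is (L0 + H, S + K, L^T G + Dl)
   with H + G Dl^T + K = 0. Pairing L0 + H with U V^T + P_U^perp Z P_V^perp (Z a unit-norm
   dual of P_U^perp H P_V^perp) and using the entrywise subgradient sgn S + F of the l1 norm,
   the certificate U V^T + W = lam (sgn S + F + P_Omega D) turns the objective increase into
     (1/10 - lam/3) ||P_U^perp H P_V^perp||_* + (lam/60) ||K - P_Omega K||_1 :
   W is orthogonal to Pi (so it only sees P_U^perp H P_V^perp, with weight 9/10), the certificate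
   is orthogonal to everything of the form G M, and ||P_Omega P_Pi|| <= 1/4 bounds ||P_Omega K||_F
   by the other two quantities. If the objective does not increase, K = 0 and H = - G Dl^T with
   Dl^T = C V^T; then pairing L0 + H with (U - e G C) V^T for small e > 0 shows that its nuclear
   norm exceeds that of L0 unless C = 0.
   Since nuc_norm picks some SVD, we also show that thin SVDs exist (spectral theorem for A^T A)
   and that every SVD has the same singular value sum, by duality with U V^T. *)

Section Frobenius.
Context {R : realType}.

Lemma mx_innerE {m n} (A B : 'M[R]_(m, n)) :
  mx_inner A B = \sum_i \sum_j A i j * B i j.
Proof.
rewrite /mx_inner /mxtrace exchange_big /=; apply: eq_bigr => j _.
by rewrite !mxE; apply: eq_bigr => i _; rewrite mxE.
Qed.

Lemma mx_innerC {m n} (A B : 'M[R]_(m, n)) : mx_inner A B = mx_inner B A.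
Proof. by rewrite !mx_innerE; apply: eq_bigr => i _; apply: eq_bigr => j _; rewrite mulrC. Qed.

Lemma mx_innerDl {m n} (A B C : 'M[R]_(m, n)) :
  mx_inner (A + B) C = mx_inner A C + mx_inner B C.
Proof. by rewrite /mx_inner linearD /= mulmxDl mxtraceD. Qed.

Lemma mx_innerDr {m n} (A B C : 'M[R]_(m, n)) :
  mx_inner C (A + B) = mx_inner C A + mx_inner C B.
Proof. by rewrite /mx_inner mulmxDr mxtraceD. Qed.

Lemma mx_innerZl {m n} a (A C : 'M[R]_(m, n)) :
  mx_inner (a *: A) C = a * mx_inner A C.
Proof. by rewrite /mx_inner linearZ /= -scalemxAl mxtraceZ. Qed.

Lemma mx_innerZr {m n} a (A C : 'M[R]_(m, n)) :
  mx_inner C (a *: A) = a * mx_inner C A.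
Proof. by rewrite /mx_inner -scalemxAr mxtraceZ. Qed.

Lemma mx_innerNr {m n} (A C : 'M[R]_(m, n)) : mx_inner C (- A) = - mx_inner C A.
Proof. by rewrite -scaleN1r mx_innerZr mulN1r. Qed.

Lemma mx_innerNl {m n} (A C : 'M[R]_(m, n)) : mx_inner (- A) C = - mx_inner A C.
Proof. by rewrite mx_innerC mx_innerNr mx_innerC. Qed.

Lemma mx_innerBl {m n} (A B C : 'M[R]_(m, n)) :
  mx_inner (A - B) C = mx_inner A C - mx_inner B C.
Proof. by rewrite mx_innerDl mx_innerNl. Qed.

Lemma mx_innerBr {m n} (A B C : 'M[R]_(m, n)) :
  mx_inner C (A - B) = mx_inner C A - mx_inner C B.
Proof. by rewrite mx_innerDr mx_innerNr. Qed.

Lemma mx_inner0l {m n} (C : 'M[R]_(m, n)) : mx_inner 0 C = 0.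
Proof. by rewrite /mx_inner trmx0 mul0mx mxtrace0. Qed.

Lemma mx_inner0r {m n} (C : 'M[R]_(m, n)) : mx_inner C 0 = 0.
Proof. by rewrite mx_innerC mx_inner0l. Qed.

Lemma mx_innerMl {m n p} (A : 'M[R]_(m, n)) (B : 'M[R]_(n, p)) C :
  mx_inner (A *m B) C = mx_inner B (A^T *m C).
Proof. by rewrite /mx_inner trmx_mul mulmxA. Qed.

Lemma mx_innerMr {m n p} (A : 'M[R]_(m, n)) (B : 'M[R]_(n, p)) C :
  mx_inner (A *m B) C = mx_inner A (C *m B^T).
Proof. by rewrite /mx_inner trmx_mul -mulmxA mxtrace_mulC mulmxA. Qed.

Lemma mx_innerMl' {m n p} (A : 'M[R]_(m, n)) (B : 'M[R]_(n, p)) C :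
  mx_inner C (A *m B) = mx_inner (A^T *m C) B.
Proof. by rewrite mx_innerC mx_innerMl mx_innerC. Qed.

Lemma mx_innerMr' {m n p} (A : 'M[R]_(m, n)) (B : 'M[R]_(n, p)) C :
  mx_inner C (A *m B) = mx_inner (C *m B^T) A.
Proof. by rewrite mx_innerC mx_innerMr mx_innerC. Qed.

Lemma mx_inner_ge0 {m n} (A : 'M[R]_(m, n)) : 0 <= mx_inner A A.
Proof.
rewrite mx_innerE; apply: sumr_ge0 => i _; apply: sumr_ge0 => j _.
by rewrite -expr2 sqr_ge0.
Qed.

Lemma mx_inner_eq0 {m n} (A : 'M[R]_(m, n)) : mx_inner A A = 0 -> A = 0.
Proof.
have sqr_ge0' (x : R) : 0 <= x * x by rewrite -expr2 sqr_ge0.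
rewrite mx_innerE => /psumr_eq0P A0; apply/matrixP => i j; rewrite mxE.
have /psumr_eq0P Ai0 : \sum_j A i j * A i j = 0.
  by apply: A0 => // k _; apply: sumr_ge0.
by apply/eqP; rewrite -sqrf_eq0 expr2 Ai0.
Qed.

Lemma mx_inner_diag {n} (M : 'M[R]_n) (s : 'rV[R]_n) :
  mx_inner M (diag_mx s) = \sum_i M i i * s 0 i.
Proof.
rewrite mx_innerE; apply: eq_bigr => i _; rewrite (bigD1 i) //= big1 ?addr0.
  by rewrite mxE eqxx mulr1n.
by move=> j /negbTE ji; rewrite mxE eq_sym ji mulr0n mulr0.
Qed.

Lemma trmx_mul_entry {m n p} (A : 'M[R]_(m, n)) (B : 'M[R]_(m, p)) i j :
  (A^T *m B) i j = mx_inner (col i A) (col j B).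
Proof.
rewrite mx_innerE !mxE; apply: eq_bigr => k _.
by rewrite big_ord1 !mxE.
Qed.

Lemma frobE {m n} (A : 'M[R]_(m, n)) : frob A = Num.sqrt (mx_inner A A).
Proof. by rewrite /frob mx_innerE. Qed.

Lemma frob_ge0 {m n} (A : 'M[R]_(m, n)) : 0 <= frob A.
Proof. by rewrite frobE sqrtr_ge0. Qed.

Lemma frob_sqr {m n} (A : 'M[R]_(m, n)) : frob A ^+ 2 = mx_inner A A.
Proof. by rewrite frobE sqr_sqrtr // mx_inner_ge0. Qed.

Lemma frob_eq0 {m n} (A : 'M[R]_(m, n)) : frob A = 0 -> A = 0.
Proof. by move=> A0; apply: mx_inner_eq0; rewrite -frob_sqr A0 expr0n. Qed.

Lemma frob0 {m n} : frob (0 : 'M[R]_(m, n)) = 0.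
Proof. by rewrite frobE mx_inner0l sqrtr0. Qed.

Lemma frob_le_sqr {m n} (A : 'M[R]_(m, n)) b :
  0 <= b -> frob A ^+ 2 <= b ^+ 2 -> frob A <= b.
Proof. by move=> b0; rewrite ler_sqr ?nnegrE ?frob_ge0. Qed.

Lemma frobZ {m n} a (A : 'M[R]_(m, n)) : frob (a *: A) = `|a| * frob A.
Proof.
by rewrite !frobE mx_innerZl mx_innerZr mulrA -expr2 sqrtrM ?sqr_ge0 // sqrtr_sqr.
Qed.

Lemma frobN {m n} (A : 'M[R]_(m, n)) : frob (- A) = frob A.
Proof. by rewrite -scaleN1r frobZ normrN normr1 mul1r. Qed.

Lemma frob_normalize {m n} (A : 'M[R]_(m, n)) :
  0 < frob A -> frob ((frob A)^-1 *: A) = 1.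
Proof. by move=> A0; rewrite frobZ ger0_norm ?invr_ge0 ?(ltW A0) // mulVf ?gt_eqF. Qed.

Lemma mx_inner_le_frob {m n} (A B : 'M[R]_(m, n)) :
  mx_inner A B <= frob A * frob B.
Proof.
set a := mx_inner A A; set b := mx_inner B B; set c := mx_inner A B.
have a0 : 0 <= a := mx_inner_ge0 A; have b0 : 0 <= b := mx_inner_ge0 B.
have c2_le : c ^+ 2 <= a * b.
  have [aE0|a_neq0] := eqVneq a 0.
    by rewrite /c (mx_inner_eq0 A aE0) mx_inner0l expr0n /= mulr_ge0.
  have := mx_inner_ge0 (c *: A - a *: B).
  rewrite !(mx_innerBl, mx_innerBr, mx_innerZl, mx_innerZr) (mx_innerC B A) -/a -/b -/c.
  have a_gt0 : 0 < a by rewrite lt_def a_neq0 a0.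
  move=> h; have : 0 <= a * (a * b - c ^+ 2) by nra.
  by rewrite pmulr_rge0 // subr_ge0.
rewrite !frobE -sqrtrM //; apply: le_trans (ler_norm _) _.
by rewrite -sqrtr_sqr ler_wsqrtr.
Qed.

Lemma frob_add_orth {m n} (A B : 'M[R]_(m, n)) : mx_inner A B = 0 ->
  frob (A + B) ^+ 2 = frob A ^+ 2 + frob B ^+ 2.
Proof. by move=> AB0; rewrite !frob_sqr mx_innerDl !mx_innerDr AB0 (mx_innerC B A) AB0; ring. Qed.

Lemma frobD {m n} (A B : 'M[R]_(m, n)) : frob (A + B) <= frob A + frob B.
Proof.
apply: frob_le_sqr; first by rewrite addr_ge0 ?frob_ge0.
rewrite !frob_sqr mx_innerDl !mx_innerDr (mx_innerC B A) -!frob_sqr.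
have := mx_inner_le_frob A B; nra.
Qed.

Lemma frob_mul_col {m n} (M : 'M[R]_(m, n)) (x : 'cV[R]_n) :
  frob (M *m x) <= frob M * frob x.
Proof.
set y := M *m x.
have frob_outer : frob (y *m x^T) = frob y * frob x.
  rewrite !frobE mx_innerMr trmxK -mulmxA [x^T *m x]mx11_scalar mul_mx_scalar.
  rewrite -trace_mx11 -/(mx_inner x x) mx_innerZr mulrC.
  by rewrite sqrtrM ?mx_inner_ge0.
have := mx_inner_le_frob M (y *m x^T).
rewrite -mx_innerMr -frob_sqr frob_outer.
have [y0|y_neq0] := eqVneq (frob y) 0; first by rewrite y0 mulr_ge0 ?frob_ge0.
have y_gt0 : 0 < frob y by rewrite lt_def y_neq0 frob_ge0.
have := frob_ge0 M; have := frob_ge0 x; nra.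
Qed.

Lemma frob_isometry {m n p} (U : 'M[R]_(m, n)) (Y : 'M[R]_(n, p)) :
  U^T *m U = 1%:M -> frob (U *m Y) = frob Y.
Proof. by move=> hU; rewrite !frobE mx_innerMl mulmxA hU mul1mx. Qed.

Lemma frob_col_orthonormal {m n} (U : 'M[R]_(m, n)) i :
  U^T *m U = 1%:M -> frob (col i U) = 1.
Proof. by move=> hU; rewrite frobE -trmx_mul_entry hU mxE eqxx mulr1n sqrtr1. Qed.

Lemma trmx_projC {m n} (U : 'M[R]_(m, n)) :
  (1%:M - U *m U^T)^T = 1%:M - U *m U^T.
Proof. by rewrite linearB /= trmx1 trmx_mul trmxK. Qed.

Lemma projC_mulmx {m n} (U : 'M[R]_(m, n)) :
  U^T *m U = 1%:M -> (1%:M - U *m U^T) *m U = 0.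
Proof. by move=> hU; rewrite mulmxBl mul1mx -mulmxA hU mulmx1 subrr. Qed.

Lemma mulmx_projC {m n} (U : 'M[R]_(m, n)) :
  U^T *m U = 1%:M -> U^T *m (1%:M - U *m U^T) = 0.
Proof. by move=> hU; rewrite mulmxBr mulmx1 mulmxA hU mul1mx subrr. Qed.

Lemma frob_sqr_proj {m n p} (U : 'M[R]_(m, n)) (X : 'M[R]_(m, p)) :
  U^T *m U = 1%:M ->
  frob X ^+ 2 = frob (U^T *m X) ^+ 2 + frob ((1%:M - U *m U^T) *m X) ^+ 2.
Proof.
move=> hU; rewrite -(frob_isometry U (U^T *m X) hU) -frob_add_orth.
  by rewrite mulmxBl mul1mx mulmxA addrC subrK.
by rewrite mx_innerMl mulmxA mulmx_projC // mul0mx mx_inner0r.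
Qed.

Lemma frob_proj_le {m n p} (U : 'M[R]_(m, n)) (X : 'M[R]_(m, p)) :
  U^T *m U = 1%:M -> frob (U^T *m X) <= frob X.
Proof.
move=> hU; apply: frob_le_sqr; first exact: frob_ge0.
by rewrite (frob_sqr_proj U X hU) lerDl sqr_ge0.
Qed.

Lemma frob_projC_le {m n p} (U : 'M[R]_(m, n)) (X : 'M[R]_(m, p)) :
  U^T *m U = 1%:M -> frob ((1%:M - U *m U^T) *m X) <= frob X.
Proof.
move=> hU; apply: frob_le_sqr; first exact: frob_ge0.
by rewrite (frob_sqr_proj U X hU) lerDr sqr_ge0.
Qed.

Lemma row_mx_orthonormal {m p q} {G : 'M[R]_(m, p)} {U : 'M[R]_(m, q)} :
  G^T *m G = 1%:M -> U^T *m U = 1%:M -> G^T *m U = 0 ->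
  (row_mx G U)^T *m row_mx G U = 1%:M.
Proof.
move=> GG UU GU; rewrite tr_row_mx mul_col_row GG UU GU.
by rewrite -(trmxK (U^T *m G)) trmx_mul trmxK GU trmx0 -scalar_mx_block.
Qed.

End Frobenius.

Lemma hermitian_nonzero_eigenrow {C : numClosedFieldType} {n} (A : 'M[C]_n) :
  A \is hermsymmx -> A != 0 ->
  exists (w : 'rV[C]_n) (d : C),
    [/\ w != 0, d \is Num.real, d != 0 & w *m A = d *: w].
Proof.
move=> Aherm A_neq0.
have /orthomx_spectralP Aeq := hermitian_normalmx Aherm.
set P := spectralmx A in Aeq; set d := spectral_diag A in Aeq.
have Punit : P \in unitmx by apply: spectral_unit.
have [i di_neq0] : exists i, d 0 i != 0.
  apply/existsP; apply: contraR A_neq0; rewrite negb_exists => /forallP d0.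
  suff dE0 : diag_mx d = 0 by rewrite Aeq dE0 mulmx0 mul0mx.
  by apply/matrixP => k l; rewrite !mxE; move/negPn/eqP: (d0 k) => ->; rewrite mul0rn.
exists (row i P), (d 0 i); split => //.
- apply/eqP => rowi0; have := row_mul i P (invmx P).
  rewrite mulmxV // rowi0 mul0mx => /rowP /(_ i); rewrite !mxE eqxx /=.
  by move/eqP; rewrite oner_eq0.
- by have /mxOverP := hermitian_spectral_diag_real Aherm; apply.
- have PA : P *m A = diag_mx d *m P by rewrite Aeq !mulmxA mulmxV // mul1mx.
  by rewrite -row_mul PA row_mul row_diag_mx -scalemxAl -rowE.
Qed.

Section RealSpectral.
Context {R : realType}.

Local Lemma Re_sum (I : finType) (F : I -> R[i]) :
  complex.Re (\sum_i F i) = \sum_i complex.Re (F i).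
Proof. by apply: big_morph => // -[? ?] [? ?]. Qed.

Local Lemma Im_sum (I : finType) (F : I -> R[i]) :
  complex.Im (\sum_i F i) = \sum_i complex.Im (F i).
Proof. by apply: big_morph => // -[? ?] [? ?]. Qed.

Lemma map_Re_Im_eigenrow {n} (S : 'M[R]_n) (w : 'rV[R[i]]_n) (a : R) :
  w *m map_mx (fun x : R => (x%:C)%C) S = (a%:C)%C *: w ->
  map_mx (@complex.Re R) w *m S = a *: map_mx (@complex.Re R) w /\
  map_mx (@complex.Im R) w *m S = a *: map_mx (@complex.Im R) w.
Proof.
move=> wS; split; apply/rowP => j; have /rowP /(_ j) := wS; rewrite !mxE.
- move=> /(congr1 (@complex.Re R)); rewrite Re_sum.
  rewrite [RHS](_ : _ = a * complex.Re (w 0 j)); last by case: (w 0 j) => x y /=; ring.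
  by move=> <-; apply: eq_bigr => k _; rewrite !mxE; case: (w 0 k) => x y /=; ring.
- move=> /(congr1 (@complex.Im R)); rewrite Im_sum.
  rewrite [RHS](_ : _ = a * complex.Im (w 0 j)); last by case: (w 0 j) => x y /=; ring.
  by move=> <-; apply: eq_bigr => k _; rewrite !mxE; case: (w 0 k) => x y /=; ring.
Qed.

Lemma symmetric_nonzero_eigenvector {n} (S : 'M[R]_n) : S^T = S -> S != 0 ->
  exists (v : 'cV[R]_n) (mu : R), [/\ v != 0, mu != 0 & S *m v = mu *: v].
Proof.
move=> Ssym S_neq0; set Sc := map_mx (fun x : R => (x%:C)%C) S.
have Sc_herm : Sc \is hermsymmx.
  apply: realsym_hermsym.
    apply/is_hermitianmxP; rewrite expr0 scale1r.
    by apply/matrixP => i j; rewrite !mxE -[in LHS]Ssym mxE.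
  apply/mxOverP => i j; rewrite mxE realE ler0c.
  by case: (lerP 0 (S i j)) => //= /ltW; rewrite -lecR.
have Sc_neq0 : Sc != 0.
  apply: contra S_neq0 => /eqP/matrixP Sc0; apply/eqP/matrixP => i j.
  by have := Sc0 i j; rewrite !mxE => -[].
have [w [d [w_neq0 d_real d_neq0 wS]]] := hermitian_nonzero_eigenrow Sc Sc_herm Sc_neq0.
set a := complex.Re d.
have dE : d = (a%:C)%C by rewrite complexRe; apply/esym/Creal_ReP.
have a_neq0 : a != 0 by apply: contra d_neq0; rewrite dE => /eqP ->.
rewrite dE in wS; have [pS qS] := map_Re_Im_eigenrow S w a wS.
have eigen_tr (y : 'rV[R]_n) : y *m S = a *: y -> S *m y^T = a *: y^T.
  by move=> yS; rewrite -{1}Ssym -trmx_mul yS linearZ.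
have [p0|p_neq0] := eqVneq (map_mx (@complex.Re R) w) 0; last first.
  by exists (map_mx (@complex.Re R) w)^T, a; rewrite trmx_eq0 eigen_tr.
exists (map_mx (@complex.Im R) w)^T, a; rewrite eigen_tr // trmx_eq0; split=> //.
apply: contra w_neq0 => /eqP q0; apply/eqP/rowP => j.
have /rowP /(_ j) := p0; have /rowP /(_ j) := q0; rewrite !mxE.
by case: (w 0 j) => x y /= -> ->.
Qed.

End RealSpectral.

Section SVD.
Context {R : realType}.

Lemma unit_col_trmx_mul {n} (v : 'cV[R]_n) : frob v = 1 -> v^T *m v = 1%:M.
Proof.
move=> v1; apply/matrixP => i j; rewrite !ord1 trmx_mul_entry.
by rewrite !col_id -frob_sqr v1 expr1n mxE eqxx.
Qed.

Lemma mulmx_diag_pos_eq0 {m k} {M : 'M[R]_(m, k)} {s : 'rV[R]_k} :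
  (forall i, 0 < s 0 i) -> M *m diag_mx s = 0 -> M = 0.
Proof.
move=> s_gt0 /matrixP Ms0; apply/matrixP => i j; have := Ms0 i j.
rewrite mul_mx_diag !mxE => /eqP; rewrite mulf_eq0 => /orP[/eqP //|/eqP sj0].
by have := s_gt0 j; rewrite sj0 ltxx.
Qed.

Lemma singular_pair {m n} (A : 'M[R]_(m, n)) : A != 0 ->
  exists (u : 'cV[R]_m) (v : 'cV[R]_n) (sg : R),
    [/\ u^T *m u = 1%:M, v^T *m v = 1%:M, 0 < sg, A *m v = sg *: u
      & u^T *m A = sg *: v^T].
Proof.
move=> A_neq0; set S := A^T *m A.
have Ssym : S^T = S by rewrite /S trmx_mul trmxK.
have S_neq0 : S != 0.
  apply: contra A_neq0 => /eqP S0; apply/eqP/mx_inner_eq0.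
  by rewrite /mx_inner -/S S0 mxtrace0.
have [v0 [mu [v0_neq0 mu_neq0 Sv0]]] := symmetric_nonzero_eigenvector S Ssym S_neq0.
have v0_gt0 : 0 < frob v0.
  by rewrite lt_def frob_ge0 andbT; apply: contra v0_neq0 => /eqP/frob_eq0 ->.
set v := (frob v0)^-1 *: v0.
have vv : v^T *m v = 1%:M by apply/unit_col_trmx_mul/frob_normalize.
have Sv : S *m v = mu *: v by rewrite /v -scalemxAr Sv0 !scalerA mulrC.
set sg := frob (A *m v).
have sg2 : sg ^+ 2 = mu.
  by rewrite frob_sqr mx_innerMl mulmxA -/S Sv mx_innerZr /mx_inner vv mxtrace1 mulr1.
have sg_gt0 : 0 < sg.
  rewrite lt_def frob_ge0 andbT; apply: contra mu_neq0 => /eqP sg0.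
  by rewrite -sg2 sg0 expr0n.
exists (sg^-1 *: (A *m v)), v, sg; split=> //.
- by apply/unit_col_trmx_mul/frob_normalize.
- by rewrite scalerA mulfV ?gt_eqF // scale1r.
- rewrite linearZ /= -scalemxAl trmx_mul -mulmxA -/S -Ssym -trmx_mul Sv.
  by rewrite linearZ /= scalerA -sg2 expr2 mulKf ?gt_eqF.
Qed.

Lemma mxrank_ltmx_kernel {m n} {A B : 'M[R]_(m, n)} {v : 'cV[R]_n} :
  (B <= A)%MS -> (v^T <= A)%MS -> B *m v = 0 -> v^T *m v = 1%:M ->
  (\rank B < \rank A)%N.
Proof.
move=> BA vA Bv vv; apply: rank_ltmx; rewrite ltmxE BA /=; apply/negP => AB.
have [w vE] := submxP (submx_trans vA AB).
move: vv; rewrite vE -mulmxA Bv mulmx0 => /matrixP /(_ 0 0).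
by rewrite !mxE eqxx => /eqP; rewrite eq_sym oner_eq0.
Qed.

Definition pos_svd {m n k} (A : 'M[R]_(m, n)) (U : 'M[R]_(m, k)) (s : 'rV[R]_k)
    (V : 'M[R]_(n, k)) : Prop :=
  is_svd A U s V /\ forall i, 0 < s 0 i.

Lemma pos_svd_add_pair {m n k} (A : 'M[R]_(m, n)) U (s : 'rV[R]_k) V
    (u : 'cV[R]_m) (v : 'cV[R]_n) (sg : R) :
  pos_svd A U s V -> u^T *m u = 1%:M -> v^T *m v = 1%:M -> 0 < sg ->
  u^T *m A = 0 -> A *m v = 0 ->
  pos_svd (A + sg *: u *m v^T) (row_mx u U) (row_mx (const_mx sg) s) (row_mx v V).
Proof.
move=> [[UU VV _ AE] s_gt0] uu vv sg_gt0 uA Av.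
have uU : u^T *m U = 0.
  apply: (mulmx_diag_pos_eq0 s_gt0); rewrite -mulmxA.
  have -> : U *m diag_mx s = A *m V by rewrite AE -mulmxA -(mulmxA U) VV mulmx1.
  by rewrite mulmxA uA mul0mx.
have vV : v^T *m V = 0.
  apply: (mulmx_diag_pos_eq0 s_gt0); rewrite -mulmxA.
  have -> : V *m diag_mx s = A^T *m U.
    by rewrite AE !trmx_mul trmxK -!mulmxA UU mulmx1 tr_diag_mx.
  by rewrite mulmxA -trmx_mul Av trmx0 mul0mx.
have s'_gt0 i : 0 < row_mx (const_mx sg) s 0 i.
  by rewrite -(splitK i); case: (split i) => j; rewrite ?row_mxEl ?row_mxEr ?mxE.
split=> //; split=> [||i|]; try exact: row_mx_orthonormal; first exact: ltW.
rewrite diag_mx_row mul_row_block !mulmx0 addr0 add0r tr_row_mx mul_row_col.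
have -> : diag_mx (const_mx sg : 'rV[R]_1) = sg%:M.
  by apply/matrixP => i j; rewrite !ord1 !mxE eqxx.
by rewrite mul_mx_scalar -AE addrC.
Qed.

Lemma pos_svd_exists {m n} (A : 'M[R]_(m, n)) :
  exists k (U : 'M[R]_(m, k)) (s : 'rV[R]_k) (V : 'M[R]_(n, k)), pos_svd A U s V.
Proof.
have [r] := ubnP (\rank A); elim: r A => // r IH A; rewrite ltnS => rankA.
have [->|A_neq0] := eqVneq A 0.
  exists 0%N, 0, 0, 0; split; last by case.
  by split=> [||[]//|]; rewrite ?mul0mx // [LHS]thinmx0 [RHS]thinmx0.
have [u [v [sg [uu vv sg_gt0 Av uA]]]] := singular_pair A A_neq0.
(* Deflating one singular pair lowers the rank. *)
set A' := (1%:M - u *m u^T) *m A.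
have uA' : u^T *m A' = 0 by rewrite mulmxA mulmx_projC ?mul0mx.
have A'v : A' *m v = 0.
  by rewrite -mulmxA Av -scalemxAr projC_mulmx ?scaler0.
have AE : A = A' + sg *: u *m v^T.
  by rewrite -scalemxAl scalemxAr -uA mulmxA /A' mulmxBl mul1mx subrK.
have vA : (v^T <= A)%MS.
  apply/submxP; exists (sg^-1 *: u^T).
  by rewrite -scalemxAl uA scalerA mulVf ?gt_eqF ?scale1r.
have /IH [k [U [s [V svdA']]]] : (\rank A' < r)%N.
  exact: leq_trans (mxrank_ltmx_kernel (submxMl _ _) vA A'v vv) rankA.
by rewrite AE; exists (1 + k)%N, (row_mx u U), (row_mx (const_mx sg) s), (row_mx v V);
  apply: pos_svd_add_pair.
Qed.

End SVD.

Section NuclearNorm.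
Context {R : realType}.

Definition spec_bounded {m n} (Z : 'M[R]_(m, n)) (c : R) : Prop :=
  forall x : 'cV[R]_n, frob (Z *m x) <= c * frob x.

Lemma spec_bounded_orthonormal {m n k} (U : 'M[R]_(m, k)) (V : 'M[R]_(n, k)) :
  U^T *m U = 1%:M -> V^T *m V = 1%:M -> spec_bounded (U *m V^T) 1.
Proof. by move=> UU VV x; rewrite -mulmxA frob_isometry // mul1r frob_proj_le. Qed.

Lemma mx_inner_svd_le {m n k} {X : 'M[R]_(m, n)} {U} {s : 'rV[R]_k} {V}
    (Z : 'M[R]_(m, n)) c :
  is_svd X U s V -> spec_bounded Z c -> mx_inner Z X <= c * \sum_i s 0 i.
Proof.
move=> [UU VV s_ge0 ->] Zc.
rewrite mx_innerMr' trmxK mx_innerMl' mx_inner_diag mulr_sumr; apply: ler_sum => i _.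
apply: ler_wpM2r => //; rewrite trmx_mul_entry.
have -> : col i (Z *m V) = Z *m col i V.
  by apply/matrixP => j l; rewrite !mxE; apply: eq_bigr => p _; rewrite !mxE.
apply: le_trans (mx_inner_le_frob _ _) _; rewrite frob_col_orthonormal // mul1r.
by apply: le_trans (Zc _) _; rewrite frob_col_orthonormal // mulr1.
Qed.

Lemma mx_inner_svd {m n k} {X : 'M[R]_(m, n)} {U} {s : 'rV[R]_k} {V} :
  is_svd X U s V -> mx_inner (U *m V^T) X = \sum_i s 0 i.
Proof.
move=> [UU VV _ ->].
rewrite mx_innerMr' trmxK mx_innerMl' mx_inner_diag -mulmxA mulmxA UU mul1mx VV.
by apply: eq_bigr => i _; rewrite mxE eqxx mulr1n mul1r.
Qed.

Lemma nuc_norm_svd_exists {m n} (X : 'M[R]_(m, n)) :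
  exists k (U : 'M[R]_(m, k)) (s : 'rV[R]_k) (V : 'M[R]_(n, k)),
    is_svd X U s V /\ nuc_norm X = \sum_i s 0 i.
Proof.
have [k [U [s [V [svdX _]]]]] := pos_svd_exists X.
rewrite /nuc_norm; set P := (X in xget _ X).
have : P (xget 0 P) by apply: xgetPex; exists (\sum_i s 0 i), k, U, s, V.
by move=> [k' [U' [s' [V' [svdX' ->]]]]]; exists k', U', s', V'.
Qed.

Lemma nuc_norm_svd {m n k} {X : 'M[R]_(m, n)} {U} {s : 'rV[R]_k} {V} :
  is_svd X U s V -> nuc_norm X = \sum_i s 0 i.
Proof.
move=> svdX; have [k' [U' [s' [V' [svdX' ->]]]]] := nuc_norm_svd_exists X.
have [[UU VV _ _] [UU' VV' _ _]] := (svdX, svdX').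
apply/le_anti/andP; split.
- rewrite -(mx_inner_svd svdX') -[X in _ <= X]mul1r.
  by apply: mx_inner_svd_le svdX _; apply: spec_bounded_orthonormal.
- rewrite -(mx_inner_svd svdX) -[X in _ <= X]mul1r.
  by apply: mx_inner_svd_le svdX' _; apply: spec_bounded_orthonormal.
Qed.

Lemma nuc_norm_dual {m n} (X Z : 'M[R]_(m, n)) c :
  spec_bounded Z c -> mx_inner Z X <= c * nuc_norm X.
Proof.
move=> Zc; have [k [U [s [V [svdX ->]]]]] := nuc_norm_svd_exists X.
exact: mx_inner_svd_le svdX Zc.
Qed.

Lemma nuc_norm_ge0 {m n} (X : 'M[R]_(m, n)) : 0 <= nuc_norm X.
Proof.
have [k [U [s [V [[_ _ s_ge0 _] ->]]]]] := nuc_norm_svd_exists X.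
exact: sumr_ge0.
Qed.

Lemma frob_le_nuc_norm {m n} (X : 'M[R]_(m, n)) : frob X <= nuc_norm X.
Proof.
have [X0|X_neq0] := eqVneq (frob X) 0; first by rewrite X0 nuc_norm_ge0.
have X_gt0 : 0 < frob X by rewrite lt_def X_neq0 frob_ge0.
have := @nuc_norm_dual _ _ X ((frob X)^-1 *: X) 1.
rewrite mx_innerZl -frob_sqr mul1r expr2 mulKf //; apply=> x.
rewrite -scalemxAl frobZ ger0_norm ?invr_ge0 ?(ltW X_gt0) // mul1r ler_pdivrMl //.
exact: frob_mul_col.
Qed.

Local Open Scope classical_set_scope.

Lemma le_sup_homogeneous {m n} (f : 'M[R]_(m, n) -> R) B c :
  (forall a X, f (a *: X) = `|a| * f X) -> (forall X, f X <= B * frob X) ->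
  sup [set f X | X in [set X | frob X = 1]] <= c -> forall X, f X <= c * frob X.
Proof.
move=> fZ fB sup_le X; have [X0|X_neq0] := eqVneq (frob X) 0.
  rewrite (frob_eq0 X X0) frob0 mulr0.
  by rewrite -(scale0r (0 : 'M[R]_(m, n))) fZ normr0 mul0r.
have X_gt0 : 0 < frob X by rewrite lt_def X_neq0 frob_ge0.
have ub : has_ubound [set f X | X in [set X | frob X = 1]].
  by exists B => _ [Y Y1 <-]; rewrite -[leRHS]mulr1 -Y1 fB.
have : f ((frob X)^-1 *: X) <= c.
  apply: le_trans sup_le; apply: (ub_le_sup ub).
  by exists ((frob X)^-1 *: X) => //; apply: frob_normalize.
by rewrite fZ ger0_norm ?invr_ge0 ?(ltW X_gt0) // mulrC ler_pdivrMr.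
Qed.

Lemma spec_norm_bounded {m n} (W : 'M[R]_(m, n)) c :
  spec_norm W <= c -> spec_bounded W c.
Proof.
move=> Wc x; pose f (y : 'cV[R]_n) := frob (W *m y).
apply: (le_sup_homogeneous f (frob W)) Wc x => [a y|y].
  by rewrite /f -scalemxAr frobZ.
exact: frob_mul_col.
Qed.

Lemma op_norm_bounded {m n} (A : 'M[R]_(m, n) -> 'M[R]_(m, n)) B c :
  (forall a X, A (a *: X) = a *: A X) -> (forall X, frob (A X) <= B * frob X) ->
  op_norm A <= c -> forall X, frob (A X) <= c * frob X.
Proof.
move=> AZ AB; apply: (le_sup_homogeneous (fun X => frob (A X))) AB.
by move=> a X; rewrite AZ frobZ.
Qed.

End NuclearNorm.

Section PiSpace.
Context {R : realType} {n1 n2 rG rn : nat}.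
Variables (G : 'M[R]_(n1, rG)) (U : 'M[R]_(n1, rn)) (V : 'M[R]_(n2, rn)).
Local Notation E := (row_mx G U).
Local Notation Pi := (Pi_space G U V).

Definition proj_Pi (X : 'M[R]_(n1, n2)) : 'M[R]_(n1, n2) :=
  X - (1%:M - E *m E^T) *m X *m (1%:M - V *m V^T).

Lemma Pi_spaceD X Y : Pi X -> Pi Y -> Pi (X + Y).
Proof.
move=> [A1 [A2 ->]] [B1 [B2 ->]]; exists (A1 + B1), (A2 + B2).
by rewrite linearD /= mulmxDr mulmxDl addrACA.
Qed.

Lemma Pi_spaceN X : Pi X -> Pi (- X).
Proof.
by move=> [A1 [A2 ->]]; exists (- A1), (- A2); rewrite opprD linearN /= mulmxN mulNmx.
Qed.

Lemma Pi_space_colspace (Y : 'M[R]_(rG + rn, n2)) : Pi (E *m Y).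
Proof. by exists Y^T, 0; rewrite trmxK mul0mx addr0. Qed.

Lemma Pi_space_rowspace (Y : 'M[R]_(n1, rn)) : Pi (Y *m V^T).
Proof. by exists 0, Y; rewrite trmx0 mulmx0 add0r. Qed.

Lemma Pi_space_G (Y : 'M[R]_(rG, n2)) : Pi (G *m Y).
Proof.
have -> : G *m Y = E *m col_mx Y 0 by rewrite mul_row_col mulmx0 addr0.
exact: Pi_space_colspace.
Qed.

Lemma Pi_space_U (Y : 'M[R]_(rn, n2)) : Pi (U *m Y).
Proof.
have -> : U *m Y = E *m col_mx 0 Y by rewrite mul_row_col mulmx0 add0r.
exact: Pi_space_colspace.
Qed.

Lemma proj_Pi_mem X : Pi (proj_Pi X).
Proof.
have -> : proj_Pi X = E *m (E^T *m X) + ((1%:M - E *m E^T) *m X *m V) *m V^T.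
  rewrite /proj_Pi mulmxBr mulmx1 opprB -mulmxA mulmxA mulmxBl mul1mx.
  by rewrite !mulmxA opprB addrC -addrA subrK addrC.
exact/Pi_spaceD/Pi_space_rowspace/Pi_space_colspace.
Qed.

Lemma subr_proj_Pi X : X - proj_Pi X = (1%:M - E *m E^T) *m X *m (1%:M - V *m V^T).
Proof. by rewrite /proj_Pi opprB addrC subrK. Qed.

Lemma proj_PiZ a X : proj_Pi (a *: X) = a *: proj_Pi X.
Proof. by rewrite /proj_Pi -scalemxAr -scalemxAl scalerBr. Qed.

Hypotheses (EE : E^T *m E = 1%:M) (VV : V^T *m V = 1%:M).

Lemma proj_Pi_orth X Z : Pi Z -> mx_inner (X - proj_Pi X) Z = 0.
Proof.
move=> [Y1 [Y2 ->]]; rewrite subr_proj_Pi mx_innerDr mx_innerMl' mx_innerMr' trmxK.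
rewrite !mulmxA mulmx_projC // !mul0mx -(mulmxA _ (1%:M - V *m V^T)).
by rewrite projC_mulmx // mulmx0 !mx_inner0l addr0.
Qed.

Lemma orth_proj_PiE X : orth_proj Pi X = proj_Pi X.
Proof.
apply: xget_unique; first by split; [apply: proj_Pi_mem | apply: proj_Pi_orth].
move=> Y [PiY YX]; apply/eqP; rewrite -subr_eq0; apply/eqP/mx_inner_eq0.
have PiD : Pi (Y - proj_Pi X) by apply/Pi_spaceD/Pi_spaceN/proj_Pi_mem.
have dE : Y - proj_Pi X = (X - proj_Pi X) - (X - Y).
  by rewrite (opprB X Y) [_ + (Y - X)]addrC addrA subrK.
by rewrite {1}dE mx_innerBl proj_Pi_orth // YX // subrr.
Qed.

Lemma frob_proj_Pi_le X : frob (proj_Pi X) <= frob X.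
Proof.
apply: frob_le_sqr; first exact: frob_ge0.
have := frob_add_orth (proj_Pi X) (X - proj_Pi X).
rewrite (addrC (proj_Pi X)) subrK mx_innerC (proj_Pi_orth _ _ (proj_Pi_mem _)) => /(_ erefl) ->.
by rewrite lerDl sqr_ge0.
Qed.

End PiSpace.

Lemma orth_Pi_mx_inner_projC {R : realType} {n1 n2 rG rn}
    {G : 'M[R]_(n1, rG)} {U : 'M[R]_(n1, rn)} {V : 'M[R]_(n2, rn)} {W} H :
  (forall Z, Pi_space G U V Z -> mx_inner W Z = 0) ->
  mx_inner W H = mx_inner W ((1%:M - U *m U^T) *m H *m (1%:M - V *m V^T)).
Proof.
move=> W_orth; apply/eqP; rewrite -subr_eq0 -mx_innerBr; apply/eqP/W_orth.
have -> : H - (1%:M - U *m U^T) *m H *m (1%:M - V *m V^T)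
    = U *m (U^T *m H) + ((1%:M - U *m U^T) *m H *m V) *m V^T.
  have UH : H - (1%:M - U *m U^T) *m H = U *m (U^T *m H).
    by rewrite mulmxBl mul1mx opprB addrC subrK mulmxA.
  by rewrite mulmxBr mulmx1 opprB addrCA addrC UH !mulmxA.
exact/Pi_spaceD/Pi_space_rowspace/Pi_space_U.
Qed.

Section Support.
Context {R : realType} {m n : nat} (Om : {set 'I_m * 'I_n}).
Implicit Types X Y : 'M[R]_(m, n).

Lemma proj_OmegaZ a X : proj_Omega Om (a *: X) = a *: proj_Omega Om X.
Proof. by apply/matrixP => i j; rewrite !mxE; case: ifP; rewrite ?mulr0. Qed.

Lemma proj_OmegaD X Y : proj_Omega Om (X + Y) = proj_Omega Om X + proj_Omega Om Y.
Proof. by apply/matrixP => i j; rewrite !mxE; case: ifP; rewrite ?addr0. Qed.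

Lemma frob_proj_Omega_le X : frob (proj_Omega Om X) <= frob X.
Proof.
rewrite /frob; apply/ler_wsqrtr/ler_sum => i _; apply: ler_sum => j _.
by rewrite mxE; case: ifP; rewrite ?expr0n ?sqr_ge0.
Qed.

Lemma mx_inner_proj_Omega X Y :
  mx_inner (proj_Omega Om X) Y = mx_inner (proj_Omega Om X) (proj_Omega Om Y).
Proof.
rewrite !mx_innerE; apply: eq_bigr => i _; apply: eq_bigr => j _.
by rewrite !mxE; case: ifP; rewrite ?mul0r.
Qed.

End Support.

Section EntrywiseNorms.
Context {R : realType}.

Lemma sum_sqr_le_sqr_sum (I : finType) (x : I -> R) :
  (forall i, 0 <= x i) -> \sum_i x i ^+ 2 <= (\sum_i x i) ^+ 2.
Proof.
move=> x_ge0; rewrite expr2 mulr_sumr; apply: ler_sum => i _.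
by rewrite expr2 mulrC ler_wpM2r // (bigD1 i) //= lerDl sumr_ge0.
Qed.

Lemma frob_le_l1 {m n} (X : 'M[R]_(m, n)) : frob X <= l1_norm X.
Proof.
have l1_ge0 : 0 <= l1_norm X by apply: sumr_ge0 => i _; apply: sumr_ge0.
rewrite /frob -(ger0_norm l1_ge0) -sqrtr_sqr; apply: ler_wsqrtr.
apply: (@le_trans _ _ (\sum_i (\sum_j `|X i j|) ^+ 2)); last first.
  by apply: sum_sqr_le_sqr_sum => i; apply: sumr_ge0.
apply: ler_sum => i _; apply: (@le_trans _ _ (\sum_j `|X i j| ^+ 2)).
  by apply: ler_sum => j _; rewrite -normrX ger0_norm ?sqr_ge0.
exact: sum_sqr_le_sqr_sum.
Qed.

Lemma linf_norm_ge {m n} (F : 'M[R]_(m, n)) i j : `|F i j| <= linf_norm F.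
Proof.
apply: le_trans (le_bigmax _ _ i).
exact: (le_bigmax _ (fun j => `|F i j|) j).
Qed.

(* Entrywise form of [sgn S + F] lying in the subdifferential of the l1 norm at [S],
   with a margin [c] off the support. *)
Lemma normr_subgradient (s k f c : R) (b : bool) :
  (s != 0 <-> b) -> (b -> f = 0) -> `|f| <= 1 - c ->
  `|s| + (Num.sg s + f) * k + c * `|k - (if b then k else 0)| <= `|s + k|.
Proof.
case: b => sb fb f_le.
- rewrite fb // subrr normr0 mulr0 !addr0.
  have := ler_norm (s + k); have := ler_norm (- (s + k)); rewrite normrN => le1 le2.
  have : s != 0 by apply/sb.
  rewrite neq_lt => /orP[s_lt0|s_gt0].
    by rewrite ltr0_sg // ltr0_norm //; lra.
  by rewrite gtr0_sg // gtr0_norm //; lra.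
- have -> : s = 0 by apply/eqP; apply: contraLR isT => /sb.
  rewrite sgr0 normr0 !add0r subr0.
  have : f * k <= `|f| * `|k| by rewrite -normrM ler_norm.
  have := normr_ge0 k; nra.
Qed.

Lemma l1_norm_subgradient {m n} (Om : {set 'I_m * 'I_n}) (S K F : 'M[R]_(m, n)) c :
  (forall i j, S i j != 0 <-> (i, j) \in Om) -> proj_Omega Om F = 0 ->
  linf_norm F <= 1 - c ->
  l1_norm S + mx_inner (sgn_mx S + F) K + c * l1_norm (K - proj_Omega Om K)
    <= l1_norm (S + K).
Proof.
move=> suppS F0 F_le; rewrite /l1_norm mx_innerE !mulr_sumr -!big_split /=.
apply: ler_sum => i _; rewrite !mulr_sumr -!big_split /=.
apply: ler_sum => j _; rewrite !mxE.
apply: normr_subgradient; first exact: suppS.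
  by move=> ijO; have /matrixP /(_ i j) := F0; rewrite !mxE ijO.
exact: le_trans (linf_norm_ge F i j) F_le.
Qed.

End EntrywiseNorms.

Section NuclearPerturbation.
Context {R : realType}.

Lemma nuc_norm_addr_ge {m n k} {L : 'M[R]_(m, n)} (H : 'M[R]_(m, n)) {U} {s : 'rV[R]_k} {V} :
  is_svd L U s V ->
  nuc_norm L + mx_inner (U *m V^T) H
    + nuc_norm ((1%:M - U *m U^T) *m H *m (1%:M - V *m V^T)) <= nuc_norm (L + H).
Proof.
move=> svdL; have [UU VV _ LE] := svdL.
set P := 1%:M - U *m U^T; set Q := 1%:M - V *m V^T; set X := P *m H *m Q.
have [k' [U' [s' [V' [svdX ->]]]]] := nuc_norm_svd_exists X.
have [UU' VV' _ XE] := svdX.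
have PT : P^T = P by rewrite trmx_projC.
have QT : Q^T = Q by rewrite trmx_projC.
(* [U V^T + P U' V'^T Q] is a contraction pairing with [L + H] to the left-hand side. *)
set Z := U *m V^T + P *m (U' *m V'^T) *m Q.
have Z_le1 : spec_bounded Z 1.
  move=> x; rewrite mul1r; apply: frob_le_sqr; first exact: frob_ge0.
  rewrite mulmxDl frob_add_orth; last first.
    by rewrite -!mulmxA mx_innerMl' PT mulmxA projC_mulmx // mul0mx mx_inner0l.
  rewrite (frob_sqr_proj V x VV) -!mulmxA frob_isometry //; apply: lerD => //.
  apply: lerXn2r; rewrite ?nnegrE ?frob_ge0 //.
  apply: le_trans (frob_projC_le _ _ UU) _; rewrite frob_isometry //.
  exact: frob_proj_le.
rewrite (nuc_norm_svd svdL) -(mx_inner_svd svdL) -(mx_inner_svd svdX).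
have -> : mx_inner (U *m V^T) L + mx_inner (U *m V^T) H + mx_inner (U' *m V'^T) X
    = mx_inner Z (L + H).
  have ZL : mx_inner (P *m (U' *m V'^T) *m Q) L = 0.
    by rewrite LE mx_innerMr mx_innerMl PT !mulmxA projC_mulmx // !mul0mx mx_inner0r.
  have ZH : mx_inner (P *m (U' *m V'^T) *m Q) H = mx_inner (U' *m V'^T) X.
    by rewrite (mx_innerMr (P *m _)) (mx_innerMl P) PT QT /X mulmxA.
  by rewrite mx_innerDl !mx_innerDr ZL ZH add0r.
by rewrite -[nuc_norm _]mul1r; apply: nuc_norm_dual.
Qed.

Section OrthogonalPerturbation.
Context {n1 n2 rG rn : nat}.
Variables (G : 'M[R]_(n1, rG)) (U : 'M[R]_(n1, rn)) (V : 'M[R]_(n2, rn)).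
Hypotheses (GG : G^T *m G = 1%:M) (UU : U^T *m U = 1%:M) (VV : V^T *m V = 1%:M)
  (GU : G^T *m U = 0).

Lemma spec_bounded_orth_perturb (C : 'M[R]_(rG, rn)) :
  spec_bounded ((U + G *m C) *m V^T) (1 + mx_inner C C / 2).
Proof.
move=> x; set y := V^T *m x.
have y_le : frob y <= frob x by apply: frob_proj_le.
have Cy_le : frob (C *m y) ^+ 2 <= mx_inner C C * frob y ^+ 2.
  rewrite -frob_sqr -exprMn lerXn2r ?nnegrE ?frob_mul_col ?frob_ge0 //.
  by rewrite mulr_ge0 ?frob_ge0.
have c_ge0 := mx_inner_ge0 C.
apply: frob_le_sqr; first by rewrite mulr_ge0 ?frob_ge0 //; lra.
rewrite -mulmxA -/y mulmxDl frob_add_orth; last first.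
  by rewrite -mulmxA mx_innerMl' mulmxA GU mul0mx mx_inner0l.
rewrite frob_isometry // -mulmxA frob_isometry //.
have := lerXn2r 2 (frob_ge0 y) (frob_ge0 x) y_le.
have := sqr_ge0 (mx_inner C C); have := frob_ge0 x; have := frob_ge0 y; nra.
Qed.

Lemma nuc_norm_orth_perturb_le (sigma : 'rV[R]_rn) (C : 'M[R]_(rG, rn)) :
  (forall i, 0 <= sigma 0 i) ->
  nuc_norm ((U *m diag_mx sigma + G *m C) *m V^T) <= \sum_i sigma 0 i -> C = 0.
Proof.
move=> sigma_ge0 nuc_le; set sig := \sum_i sigma 0 i; set c := mx_inner C C.
have sig_ge0 : 0 <= sig by apply: sumr_ge0.
have c_ge0 : 0 <= c by apply: mx_inner_ge0.
(* [(U + e G C) V^T] is a contraction up to O(e^2) but pairs with the matrix to gain [e c]. *)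
set e := (sig + 1)^-1.
have e_gt0 : 0 < e by rewrite invr_gt0; lra.
have e_sig : e * sig < 1 by rewrite mulrC ltr_pdivrMr; lra.
have := nuc_norm_dual ((U *m diag_mx sigma + G *m C) *m V^T) _ _
  (spec_bounded_orth_perturb (e *: C)).
rewrite mx_innerZl mx_innerZr mulrA -/c.
have -> : mx_inner ((U + G *m (e *: C)) *m V^T) ((U *m diag_mx sigma + G *m C) *m V^T)
    = sig + e * c.
  rewrite mx_innerMr trmxK -mulmxA VV mulmx1 mx_innerDl !mx_innerDr.
  have UG : U^T *m G = 0 by rewrite -(trmxK G) -trmx_mul GU trmx0.
  rewrite !mx_innerMl' UU GU mx_inner0l addr0 !mulmxA UG GG mul0mx mul1mx.
  rewrite mx_inner0l add0r mx_innerZl mx_inner_diag; congr (_ + _).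
  by apply: eq_bigr => i _; rewrite mxE eqxx mul1r.
move=> dual; apply: mx_inner_eq0; apply/le_anti; rewrite c_ge0 andbT -/c.
have gain : sig + e * c <= (1 + e * e * c / 2) * sig.
  apply: le_trans dual _; apply: ler_wpM2l nuc_le.
  have := mulr_ge0 (mulr_ge0 (ltW e_gt0) (ltW e_gt0)) c_ge0; lra.
have c_le : c <= e * sig * c / 2 by rewrite -(ler_pM2l e_gt0); lra.
have := ler_wpM2r c_ge0 (ltW e_sig); rewrite mul1r; lra.
Qed.

End OrthogonalPerturbation.
End NuclearPerturbation.

Section Certificate.
Context {R : realType} {n1 n2 rG rn : nat}.
Context {G : 'M[R]_(n1, rG)} {U : 'M[R]_(n1, rn)} {sigma : 'rV[R]_rn}
  {V : 'M[R]_(n2, rn)}.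
Context {Om : {set 'I_n1 * 'I_n2}} {S W F D : 'M[R]_(n1, n2)} {lam : R}.
Hypotheses (GG : G^T *m G = 1%:M) (UU : U^T *m U = 1%:M) (VV : V^T *m V = 1%:M)
  (sigma_gt0 : forall i, 0 < sigma 0 i) (GU : G^T *m U = 0).
Hypotheses (suppS : forall i j, S i j != 0 <-> (i, j) \in Om)
  (Om_Pi : forall X, frob (proj_Omega Om (proj_Pi G U V X)) <= 1 / 4 * frob X)
  (lam_gt0 : 0 < lam) (lam_lt : lam < 3 / 10)
  (dual_cert : U *m V^T + W = lam *: (sgn_mx S + F + proj_Omega Om D))
  (W_orth : forall Z, Pi_space G U V Z -> mx_inner W Z = 0)
  (W_le : spec_bounded W (9 / 10))
  (F0 : proj_Omega Om F = 0) (F_le : linf_norm F <= 9 / 10)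
  (D_le : frob (proj_Omega Om D) <= 1 / 4).

Local Notation E := (row_mx G U).
Local Notation L0 := (U *m diag_mx sigma *m V^T).
Local Notation P1 := (1%:M - U *m U^T).
Local Notation P2 := (1%:M - V *m V^T).
Local Notation Y := (sgn_mx S + F + proj_Omega Om D).

Let EE : E^T *m E = 1%:M := row_mx_orthonormal GG UU GU.

Lemma frob_proj_Omega_le_l1 (K : 'M[R]_(n1, n2)) :
  frob (proj_Omega Om K)
    <= (l1_norm (K - proj_Omega Om K) + 4 * frob (K - proj_Pi G U V K)) / 3.
Proof.
have split_sum (A : 'M[R]_(n1, n2)) : K = A + (K - A) by rewrite addrC subrK.
have a_le : frob (proj_Omega Om K) <= 1 / 4 * frob K + frob (K - proj_Pi G U V K).
  rewrite {1}(split_sum (proj_Pi G U V K)) proj_OmegaD.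
  by apply: le_trans (frobD _ _) _; apply: lerD; [apply: Om_Pi | apply: frob_proj_Omega_le].
have K_le : frob K <= frob (proj_Omega Om K) + frob (K - proj_Omega Om K).
  by rewrite {1}(split_sum (proj_Omega Om K)) frobD.
have := frob_le_l1 (K - proj_Omega Om K); lra.
Qed.

Lemma frob_projC_Pi_le_nuc {H K : 'M[R]_(n1, n2)} {Dl : 'M[R]_(n2, rG)} :
  H + G *m Dl^T + K = 0 -> frob (K - proj_Pi G U V K) <= nuc_norm (P1 *m H *m P2).
Proof.
move=> HK0; apply: le_trans (frob_le_nuc_norm _).
have /eqP := projC_mulmx _ EE; rewrite mul_mx_row row_mx_eq0 => /andP[/eqP QG /eqP QU].
have KE : K = - (H + G *m Dl^T) by apply/eqP; rewrite -addr_eq0 addrC HK0.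
have QP1 : (1%:M - E *m E^T) *m P1 = 1%:M - E *m E^T.
  by rewrite mulmxBr mulmx1 mulmxA QU mul0mx subr0.
have -> : K - proj_Pi G U V K = - ((1%:M - E *m E^T) *m (P1 *m H *m P2)).
  rewrite subr_proj_Pi KE mulmxN mulNmx [_ *m (H + _)]mulmxDr (mulmxA _ G) QG mul0mx addr0.
  by rewrite !mulmxA QP1.
by rewrite frobN frob_projC_le.
Qed.

Lemma dual_cert_orth_G (M : 'M[R]_(rG, n2)) : mx_inner Y (G *m M) = 0.
Proof.
have : lam * mx_inner Y (G *m M) = 0.
  rewrite -mx_innerZl -dual_cert mx_innerDl (W_orth _ (Pi_space_G _ _ _ M)) addr0.
  by rewrite mx_innerMl' mulmxA GU mul0mx mx_inner0l.
by move/eqP; rewrite mulf_eq0 gt_eqF //= => /eqP.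
Qed.

Lemma objective_gap {H K : 'M[R]_(n1, n2)} {Dl : 'M[R]_(n2, rG)} :
  H + G *m Dl^T + K = 0 ->
  nuc_norm L0 + lam * l1_norm S + nuc_norm (P1 *m H *m P2) * (1 / 10 - lam / 3)
    + lam * l1_norm (K - proj_Omega Om K) / 60
  <= nuc_norm (L0 + H) + lam * l1_norm (S + K).
Proof.
move=> HK0; set X := P1 *m H *m P2; set n := nuc_norm X.
set l := l1_norm (K - proj_Omega Om K); set a := frob (proj_Omega Om K).
have svdL0 : is_svd L0 U sigma V by split=> // i; apply: ltW.
have nuc_ge := nuc_norm_addr_ge H svdL0; rewrite -/X -/n in nuc_ge.
have UVH : mx_inner (U *m V^T) H = - (lam * mx_inner Y K) - mx_inner W X.
  have YH : mx_inner Y H = - mx_inner Y K.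
    have -> : H = - K - G *m Dl^T.
      by apply/eqP; rewrite -subr_eq0 opprD !opprK addrA addrAC HK0.
    by rewrite mx_innerBr mx_innerNr dual_cert_orth_G subr0.
  rewrite -[U *m V^T](addrK W) dual_cert mx_innerBl mx_innerZl YH.
  by rewrite (orth_Pi_mx_inner_projC H W_orth) mulrN.
have WX : mx_inner W X <= 9 / 10 * n := nuc_norm_dual X W _ W_le.
have l1_ge : l1_norm S + mx_inner (sgn_mx S + F) K + 1 / 10 * l <= l1_norm (S + K).
  by apply: l1_norm_subgradient suppS F0 _; move: F_le; lra.
have DK : mx_inner (proj_Omega Om D) K <= 1 / 4 * a.
  rewrite mx_inner_proj_Omega; apply: le_trans (mx_inner_le_frob _ _) _.
  by apply: ler_wpM2r D_le; apply: frob_ge0.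
have a_le : a <= (l + 4 * n) / 3.
  apply: le_trans (frob_proj_Omega_le_l1 K) _; rewrite -/l.
  by have := frob_projC_Pi_le_nuc HK0; rewrite -/X -/n; lra.
have lam_ge0 := ltW lam_gt0.
have := ler_wpM2l lam_ge0 l1_ge; have := ler_wpM2l lam_ge0 DK.
have := ler_wpM2l lam_ge0 a_le; move: nuc_ge; rewrite UVH mx_innerDl; lra.
Qed.

Lemma sparse_part_eq0 {H K : 'M[R]_(n1, n2)} {Dl : 'M[R]_(n2, rG)} :
  H + G *m Dl^T + K = 0 -> nuc_norm (P1 *m H *m P2) = 0 ->
  l1_norm (K - proj_Omega Om K) = 0 -> K = 0.
Proof.
move=> HK0 n0 l0.
have offO0 : K - proj_Omega Om K = 0.
  by apply/frob_eq0/le_anti; rewrite frob_ge0 -l0 frob_le_l1.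
have onO0 : proj_Omega Om K = 0.
  apply/frob_eq0/le_anti; rewrite frob_ge0 andbT.
  apply: le_trans (frob_proj_Omega_le_l1 K) _.
  by have := frob_projC_Pi_le_nuc HK0; rewrite n0 l0; lra.
by rewrite -(subrK (proj_Omega Om K) K) offO0 onO0 addr0.
Qed.

Lemma lowrank_part_eq0 {H : 'M[R]_(n1, n2)} {Dl : 'M[R]_(n2, rG)} :
  H + G *m Dl^T = 0 -> P1 *m H *m P2 = 0 -> nuc_norm (L0 + H) <= nuc_norm L0 -> Dl = 0.
Proof.
move=> HDl0 X0 nuc_le.
have HE : H = - (G *m Dl^T) by apply/eqP; rewrite -addr_eq0 HDl0.
have UG : U^T *m G = 0 by rewrite -(trmxK G) -trmx_mul GU trmx0.
have DlP2 : Dl^T *m P2 = 0.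
  have : G^T *m (P1 *m H *m P2) = 0 by rewrite X0 mulmx0.
  have P1G : P1 *m G = G by rewrite mulmxBl mul1mx -mulmxA UG mulmx0 subr0.
  rewrite HE mulmxN mulNmx mulmxN (mulmxA P1) P1G -!mulmxA mulmxA GG mul1mx.
  by move/eqP; rewrite oppr_eq0 => /eqP.
have DlE : Dl^T = (Dl^T *m V) *m V^T.
  by rewrite -mulmxA -[LHS]mulmx1 -(subrK (V *m V^T) 1%:M) mulmxDr DlP2 add0r.
have sigma_ge0 i : 0 <= sigma 0 i by apply: ltW.
have svdL0 : is_svd L0 U sigma V by split.
have /(nuc_norm_orth_perturb_le _ _ _ GG UU VV GU _ _ sigma_ge0) /eqP : nuc_norm
    ((U *m diag_mx sigma + G *m (- (Dl^T *m V))) *m V^T) <= \sum_i sigma 0 i.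
  by rewrite -(nuc_norm_svd svdL0) mulmxDl mulmxN mulNmx -(mulmxA G) -DlE -HE.
by rewrite oppr_eq0 => /eqP C0; rewrite -[Dl]trmxK DlE C0 mul0mx trmx0.
Qed.

Lemma perturbation_objective {H K : 'M[R]_(n1, n2)} {Dl : 'M[R]_(n2, rG)} :
  H + G *m Dl^T + K = 0 ->
  nuc_norm L0 + lam * l1_norm S <= nuc_norm (L0 + H) + lam * l1_norm (S + K) /\
  (nuc_norm (L0 + H) + lam * l1_norm (S + K) = nuc_norm L0 + lam * l1_norm S ->
   [/\ H = 0, K = 0 & Dl = 0]).
Proof.
move=> HK0; have gap := objective_gap HK0.
set n := nuc_norm (P1 *m H *m P2) in gap.
set l := l1_norm (K - proj_Omega Om K) in gap.
have n_ge0 : 0 <= n := nuc_norm_ge0 _.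
have l_ge0 : 0 <= l := le_trans (frob_ge0 _) (frob_le_l1 _).
have n_coef : 0 < 1 / 10 - lam / 3 by move: lam_lt; lra.
have := mulr_ge0 n_ge0 (ltW n_coef); have := mulr_ge0 (ltW lam_gt0) l_ge0.
move=> lam_l_ge0 n_ge0'; split; first lra.
move=> obj_eq; rewrite obj_eq in gap.
have n0 : n = 0.
  by apply/le_anti; rewrite n_ge0 andbT -(pmulr_lle0 _ n_coef); lra.
have l0 : l = 0.
  by apply/le_anti; rewrite l_ge0 andbT -(pmulr_rle0 _ lam_gt0); lra.
have K0 := sparse_part_eq0 HK0 n0 l0.
have X0 : P1 *m H *m P2 = 0.
  by apply/frob_eq0/le_anti; rewrite frob_ge0 andbT -[X in _ <= X]n0 frob_le_nuc_norm.
have HDl0 : H + G *m Dl^T = 0 by rewrite -HK0 K0 addr0.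
have Dl0 : Dl = 0.
  by apply: lowrank_part_eq0 HDl0 X0 _; move: obj_eq; rewrite K0 addr0 => /addIr ->.
by split=> //; move: HDl0; rewrite Dl0 trmx0 mulmx0 addr0.
Qed.

End Certificate.

Lemma projC_svd_orth {R : realType} {m n p k} {G : 'M[R]_(m, p)} {L : 'M[R]_(m, n)}
    {U : 'M[R]_(m, k)} {sigma : 'rV[R]_k} {V : 'M[R]_(n, k)} :
  G^T *m G = 1%:M -> V^T *m V = 1%:M -> (forall i, 0 < sigma 0 i) ->
  (1%:M - G *m G^T) *m L = U *m diag_mx sigma *m V^T -> G^T *m U = 0.
Proof.
move=> GG VV sigma_gt0 LE; apply: (mulmx_diag_pos_eq0 sigma_gt0).
have : G^T *m ((1%:M - G *m G^T) *m L) *m V = 0 by rewrite mulmxA mulmx_projC ?mul0mx.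
by rewrite LE !mulmxA -(mulmxA _ _ V) VV mulmx1.
Qed.

Theorem lemma3 (R : realType) (n1 n2 rG r rn : nat)
  (L S : 'M[R]_(n1, n2)) (Om : {set 'I_n1 * 'I_n2})
  (G : 'M[R]_(n1, rG)) (U : 'M[R]_(n1, rn)) (sigma : 'rV[R]_rn)
  (V : 'M[R]_(n2, rn)) (lam : R) (W F D : 'M[R]_(n1, n2)) :
  \rank L = r ->
  (forall i j, S i j != 0 <-> (i, j) \in Om) ->
  G^T *m G = 1%:M ->
  \rank ((1%:M - G *m G^T) *m L) = rn ->
  (rn < r)%N ->
  U^T *m U = 1%:M -> V^T *m V = 1%:M -> (forall i, 0 < sigma 0 i) ->
  (1%:M - G *m G^T) *m L = U *m diag_mx sigma *m V^T ->
  op_norm (fun X => proj_Omega Om (orth_proj (Pi_space G U V) X)) <= 1 / 4 ->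
  0 < lam -> lam < 3 / 10 ->
  U *m V^T + W = lam *: (sgn_mx S + F + proj_Omega Om D) ->
  orth_proj (Pi_space G U V) W = 0 ->
  spec_norm W <= 9 / 10 ->
  proj_Omega Om F = 0 ->
  linf_norm F <= 9 / 10 ->
  frob (proj_Omega Om D) <= 1 / 4 ->
  unique_minimizer lam G (L + S) ((1%:M - G *m G^T) *m L) S (L^T *m G).
Proof.
move=> _ suppS GG _ _ UU VV sigma_gt0 LE Om_op lam_gt0 lam_lt dual_cert W_Pi W_le
  F0 F_le D_le.
have GU := projC_svd_orth GG VV sigma_gt0 LE.
have EE := row_mx_orthonormal GG UU GU.
have W_orth Z : Pi_space G U V Z -> mx_inner W Z = 0.
  by move=> PiZ; rewrite -(subr0 W) -W_Pi orth_proj_PiE // proj_Pi_orth.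
have Om_Pi X : frob (proj_Omega Om (proj_Pi G U V X)) <= 1 / 4 * frob X.
  rewrite -orth_proj_PiE //; apply: (op_norm_bounded _ 1) Om_op X => [a Y|Y];
    rewrite !orth_proj_PiE //.
    by rewrite proj_PiZ proj_OmegaZ.
  by rewrite mul1r; apply: le_trans (frob_proj_Omega_le _ _) _; apply: frob_proj_Pi_le.
have feasible : (1%:M - G *m G^T) *m L + G *m (L^T *m G)^T + S = L + S.
  by rewrite trmx_mul trmxK mulmxBl mul1mx mulmxA subrK.
split=> // Lt St Xt feasible_t.
have HK0 : (Lt - U *m diag_mx sigma *m V^T) + G *m (Xt - L^T *m G)^T + (St - S) = 0.
  rewrite -LE linearB /= mulmxBr [_ + (G *m _ - _)]addrACA -opprD addrACA -opprD.
  by rewrite feasible_t feasible subrr.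
have [le_obj eq_obj] := perturbation_objective GG UU VV sigma_gt0 GU suppS Om_Pi lam_gt0 lam_lt
  dual_cert W_orth (spec_norm_bounded _ _ W_le) F0 F_le D_le HK0.
rewrite !subrKC in le_obj eq_obj; rewrite /= LE.
split=> // /eq_obj [/eqP H0 /eqP K0 /eqP Dl0].
by split; apply/eqP; rewrite -subr_eq0.
Qed.
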